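(* For $n\in\mathbb{N}$ let $f_n(z)=\big(\frac{z-1}{z+1}\big)^n$, $z\in\mathbb{C}_+$. Then $f_n\in\mathcal{B}$ and $\|f_n\|_{\mathcal{B}}\le3+2\log(2n)$ for each $n\in\mathbb{N}$.
   Context: $\mathbb{C}_+=\{\Re z>0\}$. $\mathcal{B}$ is the space of holomorphic $f$ on $\mathbb{C}_+$ with $\int_0^\infty\sup_{y}|f'(x+iy)|dx<\infty$, normed by $\|f\|_{\mathcal{B}}=\sup_{\mathbb{C}_+}|f|+\int_0^\infty\sup_{y\in\mathbb{R}}|f'(x+iy)|\,dx$. *)

From mathcomp Require Import all_boot all_order all_algebra.
From mathcomp Require Import all_classical all_reals all_analysis.
From mathcomp.real_closed Require Import complex.
Set Implicit Arguments.
Unset Strict Implicit.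
Unset Printing Implicit Defensive.
Import Order.TTheory GRing.Theory Num.Theory.
Import numFieldNormedType.Exports.
Local Open Scope classical_set_scope.
Local Open Scope ring_scope.

Section Hardy.
Variable R : realType.

Definition cabs (z : R[i]) : R :=
  Num.sqrt (complex.Re z ^+ 2 + complex.Im z ^+ 2).

Definition Cplus : set R[i] := [set z | 0 < complex.Re z].

(* f is holomorphic on D: complex differentiable at every point of D
   (derivable over the field R[i], i.e. complex derivative exists) *)
Definition holomorphic_on (f : R[i]^o -> R[i]^o) (D : set R[i]) : Prop :=
  forall z, D z -> derivable f z 1.

Definition cderiv (f : R[i]^o -> R[i]^o) (z : R[i]) : R[i] := 'D_1 f z.

Definition sup_abs_deriv (f : R[i]^o -> R[i]^o) (x : R) : \bar R :=
  ereal_sup [set (cabs (cderiv f (Complex x y)))%:E | y in [set: R]].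

Definition B_integral (f : R[i]^o -> R[i]^o) : \bar R :=
  (\int[@lebesgue_measure R]_(x in `]0%R, +oo[%classic) sup_abs_deriv f x)%E.

Definition sup_abs (f : R[i]^o -> R[i]^o) : \bar R :=
  ereal_sup [set (cabs (f z))%:E | z in Cplus].

Definition in_B (f : R[i]^o -> R[i]^o) : Prop :=
  holomorphic_on f Cplus /\ (B_integral f < +oo)%E.

Definition B_norm (f : R[i]^o -> R[i]^o) : \bar R :=
  (sup_abs f + B_integral f)%E.

Definition fn (n : nat) : R[i]^o -> R[i]^o :=
  fun z : R[i] => ((z - 1) / (z + 1)) ^+ n.

End Hardy.

(* Write z = x + iy with x > 0, p = |z - 1| and q = |z + 1|, so that
   q^2 = p^2 + 4x, q >= 1 + x and r = p/q <= 1.  Then |f_n(z)| = r^n <= 1 and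
   |f_n'(z)| = 2n r^(n-1) / q^2.  This is at most 2n/(1+x)^2, and also at most
   1/x because x |f_n'(z)| = n r^(n-1) (1 - r^2)/2 <= n r^(n-1) (1 - r)
   <= 1 - r^n.  Hence sup_y |f_n'(x+iy)| <= min(2n/(1+x)^2, 1/x), whose
   integrals over ]0, 1/(2n)[, [1/(2n), 2n] and ]2n, oo[ are at most 1,
   2 log(2n) and 1. *)

From mathcomp Require Import all_boot all_order all_algebra.
From mathcomp Require Import all_classical all_reals all_analysis.
From mathcomp Require Import measurable_realfun.
From mathcomp.real_closed Require Import complex.
From mathcomp.algebra_tactics Require Import ring lra.
Set Implicit Arguments.
Unset Strict Implicit.
Unset Printing Implicit Defensive.
Import Order.TTheory GRing.Theory Num.Theory.
Import numFieldNormedType.Exports.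
Local Open Scope ring_scope.
Local Open Scope classical_set_scope.

Lemma natr_exprn_subr_le1 (R : realDomainType) (n : nat) (r : R) :
  0 <= r -> r <= 1 -> n%:R * r ^+ n.-1 * (1 - r) <= 1.
Proof.
move=> r0 r1.
have geometric : 1 - r ^+ n = (1 - r) * \sum_(i < n) r ^+ i.
  by rewrite -opprB subrX1 -mulNr opprB.
have sum_ge : n%:R * r ^+ n.-1 <= \sum_(i < n) r ^+ i.
  rewrite mulr_natl -[in X in _ *+ X](card_ord n) -sumr_const.
  apply: ler_sum => i _; apply: ler_wiXn2l => //.
  by rewrite -ltnS (ltn_predK (ltn_ord i)).
have subr1_ge0 : 0 <= 1 - r by rewrite subr_ge0.
apply: le_trans (_ : 1 - r ^+ n <= 1); last by rewrite lerBlDr lerDl exprn_ge0.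
by rewrite geometric mulrC ler_wpM2l.
Qed.

Lemma natr_exprn_subr_sqr_le2 (R : realDomainType) (n : nat) (r : R) :
  0 <= r -> r <= 1 -> n%:R * r ^+ n.-1 * (1 - r ^+ 2) <= 2.
Proof.
move=> r0 r1; have := natr_exprn_subr_le1 n r0 r1.
have : 0 <= n%:R * r ^+ n.-1 by rewrite mulr_ge0 ?exprn_ge0.
have : 0 <= 1 - r by rewrite subr_ge0.
nra.
Qed.

Lemma is_deriveV_numField (R : numFieldType) (V : normedModType R) (f : V -> R)
    (x v : V) (df : R) :
  f x != 0 -> is_derive x v f df ->
  is_derive x v (fun y => (f y)^-1) (- (f x) ^- 2 *: df).
Proof.
move=> fx0 [fd <-]; apply: DeriveDef; first exact: derivableV.
exact: deriveV.
Qed.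

(* The integral of a nonnegative function is a supremum over simple minorants,
   so it is monotone without any measurability; sup_y |f_n'(x+iy)| is not
   known to be measurable. *)
Lemma ge0_le_integral_nonmeasurable d (T : measurableType d) (R : realType)
    (mu : {measure set T -> \bar R}) (D : set T) (f g : T -> \bar R) :
  (forall x, D x -> (0 <= f x)%E) -> (forall x, D x -> (f x <= g x)%E) ->
  (\int[mu]_(x in D) f x <= \int[mu]_(x in D) g x)%E.
Proof.
move=> f0 fg.
have g0 x : D x -> (0 <= g x)%E by move=> Dx; exact: le_trans (f0 x Dx) (fg x Dx).
rewrite (ge0_integralE mu f0) (ge0_integralE mu g0).
apply: ereal_sup_le => _ [h hf <-]; exists h => // x.
apply: le_trans (hf x) _; rewrite /patch; case: ifP => // /[!inE]; exact: fg.
Qed.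

Section IntegralsOnHalfLine.
Variable R : realType.
Local Notation mu := (@lebesgue_measure R).

Lemma integral_inv_itv (a b : R) : 0 < a -> a < b ->
  (\int[mu]_(x in `[a, b]) (x^-1)%:E = (ln b)%:E - (ln a)%:E)%E.
Proof.
move=> a0 ab; have x0 x : a <= x -> 0 < x by exact: lt_le_trans.
apply: continuous_FTC2 => //.
- apply: continuous_in_subspaceT => x /[!inE] /= /[!in_itv] /= /andP[/x0 xgt0 _].
  exact: inv_continuous (lt0r_neq0 xgt0).
- split.
  + move=> x /[!in_itv] /= /andP[/ltW/x0 xgt0 _].
    by have [] := is_derive1_ln xgt0.
  + exact/cvg_at_right_filter/continuous_ln.
  + exact/cvg_at_left_filter/continuous_ln/(lt_trans a0).
- move=> x /[!in_itv] /= /andP[/ltW/x0 xgt0 _].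
  by rewrite derive1E; have [_ ->] := is_derive1_ln xgt0.
Qed.

Lemma continuous_div_sqr1D (c x : R) : 0 <= x ->
  {for x, continuous (fun y : R => c / (1 + y) ^+ 2)}.
Proof.
move=> x0; have x1 : (1 + x) * (1 + x) != 0.
  by rewrite mulf_neq0 // gt_eqF // ltr_pwDl.
under [X in {for _, continuous X}]funext => y do rewrite expr2.
apply: cvgM; first exact: cvg_cst.
by apply: cvgV => //; apply: cvgM; (apply: cvgD; [exact: cvg_cst|exact: cvg_id]).
Qed.

Lemma is_derive_div1D (c x : R) : 0 <= x ->
  is_derive x 1 (fun y : R => - c / (1 + y)) (c / (1 + x) ^+ 2).
Proof.
move=> x0; have x1 : 1 + x != 0 by rewrite gt_eqF // ltr_pwDl.
have d1 : is_derive x (1 : R) (fun y : R => 1 + y) 1.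
  have := is_deriveD (@is_derive_cst _ R^o R^o 1 x 1) (@is_derive_id _ R^o x 1).
  by rewrite add0r.
have dquot : is_derive x 1 (fun y : R => - c / (1 + y))
    (- c *: (- (1 + x) ^- 2 *: 1) + (1 + x)^-1 *: 0).
  exact: is_deriveM (@is_derive_cst _ R^o R^o (- c) x 1) (is_deriveV x1 d1).
by apply: is_derive_eq dquot _; rewrite /GRing.scale /= mulr0 addr0; field.
Qed.

Lemma integral_div_sqr1D_oy (c b : R) : 0 <= c -> 0 <= b ->
  (\int[mu]_(x in `]b, +oo[) (c / (1 + x) ^+ 2)%:E = (c / (1 + b))%:E)%E.
Proof.
move=> c0 b0; have bx x : b <= x -> 0 <= x by exact: le_trans.
rewrite integral_itv_obnd_cbnd; last first.
  apply/measurable_EFinP.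
  apply: open_continuous_measurable_fun; first exact: interval_open.
  move=> x /[!inE] /= /[!in_itv] /= /andP[/ltW/bx xgt0 _].
  exact: continuous_div_sqr1D.
rewrite (@ge0_continuous_FTC2y R _ (fun y : R => - c / (1 + y)) b 0).
- by rewrite sub0e -EFinN mulNr opprK.
- by move=> x /bx x0; rewrite divr_ge0 // sqr_ge0.
- apply: continuous_in_subspaceT => x /[!inE] /= /[!in_itv] /= /andP[/bx x0 _].
  exact: continuous_div_sqr1D.
- rewrite -(mulr0 (- c)); apply: cvgM; first exact: cvg_cst.
  apply/gtr0_cvgV0.
    by near=> y; rewrite ltr_pwDl //; near: y; exact: nbhs_pinfty_gt.
  by apply: (@ger_cvgy _ _ _ _ id); [near=> y; rewrite lerDr|exact: cvg_id].
- by move=> x /ltW/bx x0; have [] := is_derive_div1D c x0.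
- apply: cvg_at_right_filter.
  apply: (@differentiable_continuous _ R^o R^o b (fun y : R => - c / (1 + y))).
  rewrite -derivable1_diffP.
  by have [] := is_derive_div1D c b0.
- move=> x /[!in_itv] /= /andP[/ltW/bx x0 _].
  by rewrite derive1E; have [_ ->] := is_derive_div1D c x0.
Unshelve. all: by end_near.
Qed.

Lemma ge0_integral_itv_split3 (f : R -> \bar R) (l a b : R) : l < a -> a <= b ->
  (forall x, l < x -> (0 <= f x)%E) -> measurable_fun `]l, +oo[ f ->
  (\int[mu]_(x in `]l, +oo[) f x = \int[mu]_(x in `]l, a[) f x +
    (\int[mu]_(x in `[a, b]) f x + \int[mu]_(x in `]b, +oo[) f x))%E.
Proof.
move=> la ab f0 mf.
have lo : `]l, +oo[ = `]l, a[ `|` `[a, +oo[ :> set R.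
  by rewrite (@itv_bndbnd_setU _ _ _ (BLeft a)) // bnd_simp.
have hi : `[a, +oo[ = `[a, b] `|` `]b, +oo[ :> set R.
  by rewrite (@itv_bndbnd_setU _ _ _ (BRight b)) // bnd_simp.
have f0' x : `]l, +oo[ x -> (0 <= f x)%E.
  by move=> /=; rewrite in_itv /= andbT; exact: f0.
rewrite lo ge0_integral_setU //; first last.
- apply/disj_setPS => x [/=]; rewrite !in_itv /= andbT => /andP[_ xa].
  by move/(lt_le_trans xa); rewrite ltxx.
- by rewrite -lo.
- by rewrite -lo.
rewrite hi ge0_integral_setU //; first last.
- apply/disj_setPS => x [/=]; rewrite !in_itv /= andbT => /andP[_ xb].
  by move/(le_lt_trans xb); rewrite ltxx.
- by move=> x hx; apply: f0'; rewrite lo; right; rewrite hi.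
- by rewrite -hi; apply: measurable_funS mf => //; rewrite lo; exact: subsetUr.
Qed.

End IntegralsOnHalfLine.

Section Majorant.
Variables (R : realType) (c : R).
Local Notation mu := (@lebesgue_measure R).

Definition majorant (x : R) : R := Num.min (c / (1 + x) ^+ 2) x^-1.

Lemma majorant_ge0 (x : R) : 0 <= c -> 0 < x -> 0 <= majorant x.
Proof.
by move=> c0 x0; rewrite le_min divr_ge0 ?sqr_ge0 // invr_ge0 ltW.
Qed.

Lemma measurable_majorant : measurable_fun (`]0, +oo[ : set R) (EFin \o majorant).
Proof.
apply/measurable_EFinP.
apply: open_continuous_measurable_fun; first exact: interval_open.
move=> x /[!inE] /= /[!in_itv] /= /andP[x0 _].
apply: (@continuous_min _ _ (fun y : R => c / (1 + y) ^+ 2) GRing.inv).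
  exact: continuous_div_sqr1D (ltW x0).
exact: inv_continuous (lt0r_neq0 x0).
Qed.

Lemma integral_majorant_le : 1 < c ->
  (\int[mu]_(x in `]0%R, +oo[) (majorant x)%:E <= (2 + 2 * ln c)%:E)%E.
Proof.
move=> c1; have cgt0 : 0 < c by exact: lt_trans c1.
have c0 := ltW cgt0.
have inv_lt : c^-1 < c by rewrite (lt_trans _ c1) // invf_lt1.
have m0 x : 0 < x -> (0 <= (majorant x)%:E)%E.
  by move=> x0; rewrite lee_fin majorant_ge0.
rewrite (@ge0_integral_itv_split3 _ _ 0 c^-1 c) ?invr_gt0 ?(ltW inv_lt) //; last first.
  exact: measurable_majorant.
have head : (\int[mu]_(x in `]0%R, c^-1%R[) (majorant x)%:E <= 1%:E)%E.
  apply: le_trans (_ : \int[mu]_(x in `]0%R, c^-1%R[) c%:E <= 1%:E)%E.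
    apply: ge0_le_integral_nonmeasurable => x /=; rewrite in_itv /= => /andP[x0 _].
      exact: m0.
    rewrite lee_fin ge_min ler_pdivrMr ?exprn_gt0 ?addr_gt0 // ler_peMr //.
    by rewrite exprn_ege1 // lerDl ltW.
  have mu_itv := lebesgue_measure_itv `]0, c^-1[%R.
  rewrite /= lte_fin invr_gt0 cgt0 -EFinB subr0 in mu_itv.
  by rewrite integral_cst //= mu_itv -EFinM divff ?gt_eqF.
have middle : (\int[mu]_(x in `[c^-1%R, c]) (majorant x)%:E <= (ln c - ln c^-1)%R%:E)%E.
  rewrite EFinB -integral_inv_itv ?invr_gt0 //.
  apply: ge0_le_integral_nonmeasurable => x /=; rewrite in_itv /= => /andP[cx _].
    by rewrite m0 // (lt_le_trans _ cx) // invr_gt0.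
  by rewrite lee_fin ge_min lexx orbT.
have tail : (\int[mu]_(x in `]c, +oo[) (majorant x)%:E <= (c / (1 + c))%R%:E)%E.
  rewrite -integral_div_sqr1D_oy //.
  apply: ge0_le_integral_nonmeasurable => x /=; rewrite in_itv /= andbT => cx.
    by rewrite m0 // (lt_trans cgt0).
  by rewrite lee_fin ge_min lexx.
apply: le_trans (leeD head (leeD middle tail)) _.
rewrite -!EFinD lee_fin lnV ?posrE //.
have : c / (1 + c) <= 1 by rewrite ler_pdivrMr ?addr_gt0 // mul1r lerDr.
lra.
Qed.

End Majorant.

Section CayleyPowers.
Variable R : realType.
Local Notation C := R[i].
Local Notation normc := (@Normc.normc R).

Lemma cabsE (w : C) : cabs w = normc w.
Proof. by case: w. Qed.

Lemma normcX (w : C) k : normc (w ^+ k) = normc w ^+ k.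
Proof.
elim: k => [|k IH]; first by rewrite !expr0 Normc.normc1.
by rewrite !exprS Normc.normcM IH.
Qed.

Lemma normc_ge0 (w : C) : 0 <= normc w.
Proof. by case: w => a b; rewrite /= sqrtr_ge0. Qed.

Lemma sqr_normc (w : C) : normc w ^+ 2 = complex.Re w ^+ 2 + complex.Im w ^+ 2.
Proof. by case: w => a b; rewrite /= sqr_sqrtr // addr_ge0 // sqr_ge0. Qed.

Lemma sqr_normc_addr1 (z : C) :
  normc (z + 1) ^+ 2 = normc (z - 1) ^+ 2 + 4 * complex.Re z.
Proof. by case: z => a b; rewrite !sqr_normc /=; ring. Qed.

Lemma sqr_addr1_le_normc (z : C) : (1 + complex.Re z) ^+ 2 <= normc (z + 1) ^+ 2.
Proof. by case: z => a b; rewrite sqr_normc /= addrC lerDl sqr_ge0. Qed.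

Section RightHalfPlane.
Variable z : C.
Hypothesis Rez_gt0 : 0 < complex.Re z.

Lemma normc_addr1_gt0 : 0 < normc (z + 1).
Proof.
rewrite -(@ltr_pXn2r _ 2) ?nnegrE ?normc_ge0 // expr0n.
by apply: lt_le_trans (sqr_addr1_le_normc z); rewrite exprn_gt0 // addr_gt0.
Qed.

Lemma addr1_neq0 : z + 1 != 0.
Proof.
by apply: contraTneq normc_addr1_gt0 => ->; rewrite Normc.normc0 ltxx.
Qed.

Lemma normc_subr1_le : normc (z - 1) <= normc (z + 1).
Proof.
rewrite -(@ler_pXn2r _ 2) ?nnegrE ?normc_ge0 // sqr_normc_addr1 lerDl.
by rewrite mulr_ge0 // ltW.
Qed.

Lemma normc_cayley_le1 : normc (z - 1) / normc (z + 1) <= 1.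
Proof. by rewrite ler_pdivrMr ?normc_addr1_gt0 // mul1r normc_subr1_le. Qed.

End RightHalfPlane.

Lemma is_derive_cayley (z : C) : z + 1 != 0 ->
  is_derive (z : C^o) 1 (fun y : C^o => (y - 1) / (y + 1)) (2 / (z + 1) ^+ 2).
Proof.
move=> z1.
have dsub : is_derive (z : C^o) 1 (fun y : C^o => y - 1) 1.
  have := is_deriveB (@is_derive_id _ C^o z 1) (@is_derive_cst _ C^o C^o 1 z 1).
  by rewrite subr0.
have dadd : is_derive (z : C^o) 1 (fun y : C^o => y + 1) 1.
  have := is_deriveD (@is_derive_id _ C^o z 1) (@is_derive_cst _ C^o C^o 1 z 1).
  by rewrite addr0.
have dquot : is_derive (z : C^o) 1 (fun y : C^o => (y - 1) / (y + 1))
    ((z - 1) *: (- (z + 1) ^- 2 *: 1) + (z + 1)^-1 *: 1).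
  exact: is_deriveM dsub (is_deriveV_numField z1 dadd).
by apply: is_derive_eq dquot _; rewrite /GRing.scale /=; field.
Qed.

Lemma is_derive_fn n (z : C) : z + 1 != 0 ->
  is_derive (z : C^o) 1 (fn n)
    (n%:R * ((z - 1) / (z + 1)) ^+ n.-1 * (2 / (z + 1) ^+ 2)).
Proof. by move=> z1; have := is_deriveX n (is_derive_cayley z1); rewrite exprfctE. Qed.

Lemma normc_deriv_fn n (z : C) : z + 1 != 0 ->
  normc (cderiv (fn n) z) =
    n%:R * (normc (z - 1) / normc (z + 1)) ^+ n.-1 * (2 / normc (z + 1) ^+ 2).
Proof.
move=> z1; rewrite /cderiv; have [_ ->] := is_derive_fn n z1.
by rewrite !(Normc.normcM, Normc.normcV, normcX, normcMn, Normc.normc1).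
Qed.

Lemma cabs_fn_le1 n (z : C) : 0 < complex.Re z -> cabs (fn n z) <= 1.
Proof.
move=> z0; rewrite cabsE /fn normcX Normc.normcM Normc.normcV.
by rewrite exprn_ile1 ?divr_ge0 ?normc_ge0 ?normc_cayley_le1.
Qed.

Lemma cabs_deriv_fn_le n (z : C) : 0 < complex.Re z ->
  cabs (cderiv (fn n) z) <= majorant (2 * n%:R) (complex.Re z).
Proof.
move=> x0; rewrite cabsE normc_deriv_fn ?addr1_neq0 //.
have q0 := normc_addr1_gt0 x0; have r1 := normc_cayley_le1 x0.
have r0 : 0 <= normc (z - 1) / normc (z + 1) by rewrite divr_ge0 ?normc_ge0.
have hx := sqr_normc_addr1 z; have hq := sqr_addr1_le_normc z.
set p := normc (z - 1) in r0 r1 hx *; set q := normc (z + 1) in q0 r0 r1 hx hq *.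
set r := p / q in r0 r1 *; set x := complex.Re z in x0 hx hq *.
rewrite le_min; apply/andP; split.
- have rn : n%:R * r ^+ n.-1 <= n%:R by apply: ler_piMr; rewrite ?exprn_ile1.
  have sq : 2 / q ^+ 2 <= 2 / (1 + x) ^+ 2.
    by rewrite ler_pM2l // lef_pV2 ?posrE ?exprn_gt0 ?addr_gt0.
  apply: le_trans (ler_wpM2r _ rn) _; first by rewrite divr_ge0 ?exprn_ge0 ?ltW.
  by rewrite [leRHS]mulrAC [leRHS]mulrC ler_wpM2l.
- have x_sq : x * (2 / q ^+ 2) = (1 - r ^+ 2) / 2.
    have -> : x = (q ^+ 2 - p ^+ 2) / 4 by rewrite hx; field.
    by rewrite /r expr_div_n; field; rewrite gt_eqF.
  rewrite -(ler_pM2l x0) mulfV ?gt_eqF // mulrCA x_sq mulrA.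
  by rewrite ler_pdivrMr // mul1r natr_exprn_subr_sqr_le2.
Qed.

End CayleyPowers.

Section FnInB.
Variables (R : realType) (n : nat).

Lemma holomorphic_fn : holomorphic_on (@fn R n) (@Cplus R).
Proof. by move=> z /addr1_neq0 z1; have [] := is_derive_fn n z1. Qed.

Lemma sup_abs_fn_le1 : (sup_abs (@fn R n) <= 1%:E)%E.
Proof. by apply: ge_ereal_sup => _ [z zC <-]; rewrite lee_fin cabs_fn_le1. Qed.

Lemma sup_abs_deriv_ge0 (f : R[i]^o -> R[i]^o) (x : R) :
  (0 <= sup_abs_deriv f x)%E.
Proof.
apply: le_trans (_ : (cabs (cderiv f (Complex x 0)))%:E <= _)%E.
  by rewrite lee_fin /cabs sqrtr_ge0.
by apply: ereal_sup_ubound; exists 0.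
Qed.

Lemma sup_abs_deriv_fn_le (x : R) : 0 < x ->
  (sup_abs_deriv (@fn R n) x <= (majorant (2 * n%:R) x)%:E)%E.
Proof.
by move=> x0; apply: ge_ereal_sup => _ [y _ <-]; rewrite lee_fin cabs_deriv_fn_le.
Qed.

Lemma B_integral_fn_le : (1 <= n)%N ->
  (B_integral (@fn R n) <= (2 + 2 * ln (2 * n%:R))%:E)%E.
Proof.
move=> n1; apply: le_trans (integral_majorant_le _); last first.
  have : 1 <= n%:R :> R by rewrite ler1n.
  lra.
apply: ge0_le_integral_nonmeasurable => x; first by rewrite sup_abs_deriv_ge0.
by rewrite /= in_itv /= andbT => /sup_abs_deriv_fn_le.
Qed.

End FnInB.

Theorem lemma3p7 (R : realType) (n : nat) (hn : (1 <= n)%N) :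
  in_B (@fn R n) /\
  (B_norm (@fn R n) <= (3 + 2 * ln (2 * n%:R) : R)%:E)%E.
Proof.
have hI := @B_integral_fn_le R n hn.
split; first split.
- exact: holomorphic_fn.
- by rewrite (le_lt_trans hI) ?ltry.
- apply: le_trans (leeD (@sup_abs_fn_le1 R n) hI) _.
  by rewrite -EFinD lee_fin; lra.
Qed.
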